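(* Let $m\in\mathbb{Z}_2\setminus\{0\}$ and $f(x)=x^2+(1-4m)x$ on $\mathbb{Z}_2$. Then $f$ has the two fixed points $0$ and $4m$, $f(1+2\mathbb{Z}_2)\subset 2\mathbb{Z}_2$, and $$2\mathbb{Z}_2=\{0,4m\}\sqcup E_1\sqcup E_2\sqcup E_3,$$ where $$E_1=\bigsqcup_{2\le n<v_2(m)+3}\big(2^{n-1}+2^n\mathbb{Z}_2\big)-\{\text{I-}[n-2]\},$$ $$E_2=\bigsqcup_{n>v_2(m)+3}\big(2^{n-1}+2^n\mathbb{Z}_2\big)-\{\text{I-}[v_2(m)+1]\},$$ $$E_3=\bigsqcup_{n>v_2(m)+3}\big(4m+2^{n-1}+2^n\mathbb{Z}_2\big)-\{\text{I-}[v_2(m)+1]\}.$$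
   Context: $v_2$ is the $2$-adic valuation. For $n\ge1$, $f_n:\mathbb{Z}/2^n\mathbb{Z}\to\mathbb{Z}/2^n\mathbb{Z}$ is the induced map $f_n(x\bmod 2^n)=f(x)\bmod 2^n$. A cycle of $f_n$ (at level $n$) of length $k$ is a tuple $\sigma=(x_1,\dots,x_k)$ of distinct elements with $f_n(x_i)=x_{i+1}$ ($i<k$), $f_n(x_k)=x_1$. The set $X_\sigma=\{y\in\mathbb{Z}/2^{n+1}\mathbb{Z}: y\bmod 2^n\in\sigma\}$ is $f_{n+1}$-invariant; the cycles of $f_{n+1}$ in $X_\sigma$ are the lifts of $\sigma$. $\sigma$ grows if $X_\sigma$ is a single cycle of length $2k$, and splits if $X_\sigma$ is the union of two cycles of length $k$. For $k\ge0$, $\sigma$ ''splits $k$ times and then its lifts grow forever'' means: every cycle at level $n+j$, $0\le j\le k-1$, lying above $\sigma$ (i.e. reducing mod $2^n$ into $\sigma$) splits, and every cycle at any level $\ge n+k$ lying above $\sigma$ grows. A ball $F=x+2^n\mathbb{Z}_2$ with $(x\bmod 2^n)$ a fixed point (1-cycle) of $f_n$ is of type I-$[k]$ if this 1-cycle splits $k$ times and then its lifts grow forever (then $F$ is a disjoint union of $2^k$ balls of radius $2^{-n-k}$, each $f$-invariant with $f$ minimal on it). The notation $E=\bigsqcup_{n\in J}F_n-\{\text{I-}[k]\}$ means $E$ is the disjoint union of the sets $F_n$, each of which is of type I-$[k]$ (with $k$ possibly depending on $n$ as indicated). *)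

From mathcomp Require Import all_boot all_algebra.
Set Implicit Arguments. Unset Strict Implicit. Unset Printing Implicit Defensive.
Import GRing.Theory Num.Theory.

(* Z_2 : a 2-adic integer is its (infinite) stream of binary digits. *)
Definition Z2 := nat -> bool.

Definition res (n : nat) (x : Z2) : nat := \sum_(i < n) (x i) * 2 ^ i.

Definition Z2zero : Z2 := fun _ => false.

Definition mul4 (m : Z2) : Z2 := fun i => if i < 2 then false else m (i - 2).

Definition is_v2 (m : Z2) (v : nat) : Prop := m v = true /\ forall i, i < v -> m i = false.

Definition fn (m : Z2) (n : nat) (a : nat) : nat :=
  `|(((a%:Z) ^+ 2 + (1 - 4 * (res n m)%:Z) * a%:Z) %% (2 ^ n)%:Z)%Z|%N.

(* f : Z_2 -> Z_2, f(x) = x^2 + (1-4m) x : its i-th digit is read off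
   f(x) mod 2^(i+1) = f_(i+1)(x mod 2^(i+1)). *)
Definition fZ2 (m : Z2) (x : Z2) : Z2 :=
  fun i => odd (fn m i.+1 (res i.+1 x) %/ 2 ^ i).

Definition exact_period (g : nat -> nat) (k y : nat) : Prop :=
  0 < k /\ iter k g y = y /\ forall j, 0 < j < k -> iter j g y <> y.

(* The cycle sigma of f_n through a (of length k) at level n: points iter j (f_n) a, j<k.
   X_sigma at level n+1: residues y mod 2^(n+1) reducing mod 2^n into sigma. *)
Definition in_X (m : Z2) (n a k y : nat) : Prop :=
  y < 2 ^ n.+1 /\ exists2 j, j < k & y %% 2 ^ n = iter j (fn m n) a.

(* sigma grows: X_sigma is a single cycle of length 2k (every point of X_sigma,
   which has 2k elements, has exact period 2k under f_(n+1)). *)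
Definition grows (m : Z2) (n a k : nat) : Prop :=
  forall y, in_X m n a k y -> exact_period (fn m n.+1) (2 * k) y.

(* sigma splits: X_sigma is the union of two cycles of length k
   (every point of X_sigma has exact period k under f_(n+1)). *)
Definition splits (m : Z2) (n a k : nat) : Prop :=
  forall y, in_X m n a k y -> exact_period (fn m n.+1) k y.

Definition above_fixed (m : Z2) (N b l n a : nat) : Prop :=
  forall j, j < l -> iter j (fn m N) b %% 2 ^ n = a.

Definition ball (n a : nat) (x : Z2) : Prop := res n x = a.

(* The ball a + 2^n Z_2 is of type I-[k]: a is a fixed point of f_n, and this
   1-cycle splits k times and then its lifts grow forever. *)
Definition typeI (m : Z2) (n a k : nat) : Prop :=
  [/\ a < 2 ^ n, fn m n a = a,
      (forall j b l, j < k -> b < 2 ^ (n + j) -> exact_period (fn m (n + j)) l b ->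
         above_fixed m (n + j) b l n a -> splits m (n + j) b l) &
      (forall N b l, n + k <= N -> b < 2 ^ N -> exact_period (fn m N) l b ->
         above_fixed m N b l n a -> grows m N b l)].

Inductive piece_lbl := L04 | L1 of nat | L2 of nat | L3 of nat.

Definition c1 (n : nat) : nat := 2 ^ n.-1.
Definition c3 (m : Z2) (n : nat) : nat := (4 * res n m + 2 ^ n.-1) %% 2 ^ n.

Definition valid_lbl (v : nat) (l : piece_lbl) : Prop :=
  match l with
  | L04 => True
  | L1 n => 2 <= n < v + 3
  | L2 n => v + 3 < n
  | L3 n => v + 3 < n
  end.

Definition piece (m : Z2) (l : piece_lbl) (x : Z2) : Prop :=
  match l with
  | L04 => x = Z2zero \/ x = mul4 m
  | L1 n => ball n (c1 n) x
  | L2 n => ball n (c1 n) x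
  | L3 n => ball n (c3 m n) x
  end.

From mathcomp Require Import all_boot all_algebra.
From mathcomp Require Import ring zify.
From Stdlib Require Import FunctionalExtensionality Classical.
Set Implicit Arguments. Unset Strict Implicit. Unset Printing Implicit Defensive.
Import GRing.Theory Num.Theory.

(* Since f(x) - x = x (x - 4m), the fixed points of f are the zeros 0 and 4m of
   x (x - 4m) in the domain Z_2.  The difference f(y) - f(x) is (y - x) times
   x + y + 1 - 4m, a unit congruent to 1 mod 4 when x is even and y = x mod 4; so
   if x is even and v_2(x (x - 4m)) = r >= 2, then f^(2^j)(x) - x has valuation
   exactly r + j.  On a ball 2^(n-1) + 2^n Z_2 on which v_2(x (x - 4m)) = r is
   constant, every point is therefore fixed by f_L for L <= r and has exact
   period 2^(L - r) under f_L for L >= r, i.e. the ball is of type I-[r - n].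
   Comparing v_2(x) with v_2(4m) = v_2(m) + 2 gives r = 2(n - 1) on the balls of
   E1 and r = n + v_2(m) + 1 on those of E2 and E3. *)

(** * Exact periods *)

Lemma iter_mul_period (T : Type) (g : T -> T) (y : T) (t q : nat) :
  iter t g y = y -> iter (q * t) g y = y.
Proof. by move=> ht; elim: q => // q IH; rewrite mulSn iterD IH. Qed.

Section ExactPeriod.
Variables (g : nat -> nat) (y : nat).

Lemma exact_period_dvdn t k : exact_period g t y -> iter k g y = y -> t %| k.
Proof.
case=> t_gt0 [ht hmin] hk; rewrite /dvdn; case: posnP => // r_gt0.
have hr : iter (k %% t) g y = y.
  by rewrite -[in RHS]hk {2}(divn_eq k t) addnC iterD iter_mul_period.
by case: (hmin (k %% t)); rewrite ?r_gt0 ?ltn_mod.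
Qed.

Lemma exact_period_uniq t t' : exact_period g t y -> exact_period g t' y -> t = t'.
Proof.
move=> ht ht'; apply/eqP; rewrite eqn_dvd.
have [_ [et _]] := ht; have [_ [et' _]] := ht'.
by rewrite (exact_period_dvdn ht et') (exact_period_dvdn ht' et).
Qed.

Lemma exact_period_exists p : 0 < p -> iter p g y = y -> exists t, exact_period g t y.
Proof.
move=> p_gt0 hp; have ex : exists t, (0 < t) && (iter t g y == y).
  by exists p; rewrite p_gt0 hp eqxx.
case: (ex_minnP ex) => t /andP[t_gt0 /eqP ht] tmin.
exists t; split; [done | split => // j /andP[j_gt0 jt] hj].
by have := tmin j; rewrite j_gt0 hj eqxx leqNgt jt => /(_ isT).
Qed.

(* The least period divides 2^s, hence is a power of 2; it cannot divide 2^(s-1). *)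
Lemma exact_period_pow2 s : iter (2 ^ s) g y = y ->
  (0 < s -> iter (2 ^ s.-1) g y <> y) -> exact_period g (2 ^ s) y.
Proof.
move=> hs hs1; have [t ht] := exact_period_exists (expn_gt0 2 s) hs.
have /(dvdn_pfactor _ _ (isT : prime 2)) [i le_is ti] := exact_period_dvdn ht hs.
case: (ltnP i s) => [lt_is|le_si]; last first.
  by rewrite -(_ : i = s) -?ti //; apply/anti_leq; rewrite le_is le_si.
exfalso; apply: hs1; first by case: (s) lt_is.
rewrite -(subnK (_ : i <= s.-1)) ?expnD; last by case: (s) lt_is.
by apply: iter_mul_period; rewrite -ti; case: ht => _ [].
Qed.

End ExactPeriod.

(** * 2-adic valuations of integers *)

Local Open Scope ring_scope.

Lemma PoszX2 (n : nat) : (2 ^ n)%:Z = 2 ^+ n.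
Proof. by rewrite -natz natrX. Qed.

Lemma dvdz_subC (d x y : int) : (d %| x - y)%Z = (d %| y - x)%Z.
Proof. by rewrite -opprB rpredN. Qed.

Lemma dvdz_subr_trans (d x y z : int) :
  (d %| x - y)%Z -> (d %| y - z)%Z -> (d %| x - z)%Z.
Proof.
move=> hxy hyz; have -> : x - z = (x - y) + (y - z) by ring.
exact: rpredD.
Qed.

Lemma dvdz_modn (a d : nat) : (d%:Z %| (a %% d)%N%:Z - a%:Z)%Z.
Proof.
by apply/dvdzP; exists (- (a %/ d)%N%:Z); rewrite {2}(divn_eq a d) PoszD PoszM; ring.
Qed.

Lemma eqn_dvdz (a b D : nat) :
  (a < D)%N -> (b < D)%N -> (D%:Z %| a%:Z - b%:Z)%Z -> a = b.
Proof. by rewrite -eqz_mod_dvd !modz_nat => ha hb /eqP []; rewrite !modn_small. Qed.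

Definition is_v2z (z : int) (e : nat) : Prop := exists u : int, z = 2 ^+ e * (2 * u + 1).

Lemma v2z_dvdz (z : int) (e e' : nat) : is_v2z z e -> (e' <= e)%N -> (2 ^+ e' %| z)%Z.
Proof. by case=> u -> le_e'e; rewrite dvdz_mulr // -(subnK le_e'e) exprD dvdz_mull. Qed.

Lemma v2z_ndvdz (z : int) (e : nat) : is_v2z z e -> ~ (2 ^+ e.+1 %| z)%Z.
Proof.
case=> u -> /dvdzP [q hq].
have : 2 * u + 1 = q * 2.
  by apply: (mulfI (expf_neq0 e (isT : (2 : int) != 0))); rewrite hq exprSr; ring.
lia.
Qed.

Lemma v2z_of_dvdz (x : int) (e : nat) : (2 ^+ e.+1 %| x - 2 ^+ e)%Z -> is_v2z x e.
Proof. by case/dvdzP=> q hq; exists q; rewrite -[x](subrK (2 ^+ e)) hq exprS; ring. Qed.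

Lemma v2zM (x y : int) (a b : nat) : is_v2z x a -> is_v2z y b -> is_v2z (x * y) (a + b).
Proof. by case=> u -> [w ->]; exists (2 * u * w + u + w); rewrite exprD; ring. Qed.

Lemma v2zDr (x y : int) (a : nat) : is_v2z x a -> (2 ^+ a.+1 %| y)%Z -> is_v2z (x + y) a.
Proof. by case=> u -> /dvdzP [q ->]; exists (u + q); rewrite exprS; ring. Qed.

Lemma v2zN (x : int) (a : nat) : is_v2z x a -> is_v2z (- x) a.
Proof. by case=> u ->; exists (- u - 1); ring. Qed.

Definition fZ (M x : int) : int := x ^+ 2 + (1 - 4 * M) * x.

Lemma fZ_subr (M x : int) : fZ M x - x = x * (x - 4 * M).
Proof. by rewrite /fZ; ring. Qed.

Lemma fZ_sub (M x y : int) : fZ M x - fZ M y = (x - y) * (x + y + 1 - 4 * M).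
Proof. by rewrite /fZ; ring. Qed.

Lemma iter_fZ_sub (M : int) (t : nat) (x y : int) : (2 %| x)%Z -> (4 %| y - x)%Z ->
  exists q : int, iter t (fZ M) y - iter t (fZ M) x = (y - x) * (1 + 4 * q).
Proof.
elim: t x y => [|t IH] x y /dvdzP [c ->] /dvdzP [e hyx].
  by exists 0; rewrite /=; ring.
have hy : y = 4 * e + 2 * c by rewrite -[y](subrK (c * 2)) hyx; ring.
have [||q hq] := IH (fZ M (c * 2)) (fZ M y).
- by apply/dvdzP; exists (c * (2 * c + 1 - 4 * M)); rewrite /fZ; ring.
- by apply/dvdzP; exists (e * (4 * c + 4 * e + 1 - 4 * M)); rewrite fZ_sub hy; ring.
exists (c + e - M + q + 4 * (c + e - M) * q).
by rewrite !iterSr hq fZ_sub hy; ring.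
Qed.

Lemma v2z_iter_fZ_pow2 (M x : int) (r : nat) : (2 %| x)%Z -> (2 <= r)%N ->
  is_v2z (x * (x - 4 * M)) r -> forall j, is_v2z (iter (2 ^ j) (fZ M) x - x) (r + j).
Proof.
move=> x_even r_ge2 hr; elim=> [|j IH]; first by rewrite addn0 /= fZ_subr.
set y := iter (2 ^ j) (fZ M) x in IH.
have [|q hq] := @iter_fZ_sub M (2 ^ j) x y x_even.
  by rewrite (_ : 4 = 2 ^+ 2) //; apply: (v2z_dvdz IH); apply: leq_trans (leq_addr _ _).
have -> : iter (2 ^ j.+1) (fZ M) x - x = (y - x) * (2 * (2 * q + 1)).
  rewrite expnS mul2n -addnn iterD -/y.
  have -> : forall z : int, z - x = (z - y) + (y - x) by move=> z; ring.
  by rewrite hq; ring.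
by rewrite addnS -[(r + j).+1]addn1; apply: v2zM IH _; exists q; ring.
Qed.

(** * Digit streams *)

Lemma res_S (n : nat) (x : Z2) : res n.+1 x = (res n x + x n * 2 ^ n)%N.
Proof. by rewrite /res big_ord_recr. Qed.

Lemma res_lt (n : nat) (x : Z2) : (res n x < 2 ^ n)%N.
Proof.
elim: n => [|n IH]; first by rewrite /res big_ord0.
by rewrite res_S expnS; case: (x n); lia.
Qed.

Lemma res_mod (k n : nat) (x : Z2) : (k <= n)%N -> (res n x %% 2 ^ k)%N = res k x.
Proof.
move=> /subnKC <-; elim: (n - k)%N => [|j IH]; first by rewrite addn0 modn_small ?res_lt.
by rewrite addnS res_S expnD mulnCA -modnDm modnMr addn0 IH modn_small ?res_lt.
Qed.

Lemma dvdz_res (x : Z2) (k n : nat) :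
  (k <= n)%N -> (2 ^+ k %| (res n x)%:Z - (res k x)%:Z)%Z.
Proof.
move=> le_kn; apply/dvdzP; exists (res n x %/ 2 ^ k)%N%:Z.
by rewrite {1}(divn_eq (res n x) (2 ^ k)) res_mod // PoszD PoszM PoszX2; ring.
Qed.

Lemma res_eq (n : nat) (x y : Z2) :
  res n x = res n y <-> (forall i, (i < n)%N -> x i = y i).
Proof.
elim: n => [|n IH]; first by rewrite /res !big_ord0.
have digits (c d : bool) :
    (res n x + c * 2 ^ n = res n y + d * 2 ^ n)%N -> res n x = res n y /\ c = d.
  by have := res_lt n x; have := res_lt n y; case: c; case: d => /=; lia.
rewrite !res_S; split => [/digits [] /IH hlow hn i|hxy].
  by rewrite ltnS leq_eqVlt => /orP [/eqP -> | /hlow].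
by rewrite (proj2 IH) ?hxy // => i /ltnW /hxy.
Qed.

Lemma Z2_ext (x y : Z2) : (forall n, res n x = res n y) -> x = y.
Proof.
by move=> h; apply: functional_extensionality => i; apply: (proj1 (res_eq i.+1 x y)).
Qed.

Lemma res_Z2zero (n : nat) : res n Z2zero = 0%N.
Proof. by rewrite /res big1. Qed.

Lemma res_mul4 (m : Z2) (n : nat) : res n.+2 (mul4 m) = (4 * res n m)%N.
Proof.
elim: n => [|n IH]; first by rewrite /res !big_ord_recr !big_ord0.
by rewrite res_S IH res_S /mul4 /= subn2 !expnS; ring.
Qed.

Lemma dvdz_res_mul4 (m : Z2) (n : nat) :
  (2 ^+ n %| (res n (mul4 m))%:Z - 4 * (res n m)%:Z)%Z.
Proof.
by have := @dvdz_res (mul4 m) n n.+2 (leqW (leqnSn n)); rewrite res_mul4 PoszM dvdz_subC.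
Qed.

Lemma is_v2_exists (x : Z2) : x <> Z2zero -> exists v, is_v2 x v.
Proof.
move=> nz; have ex : exists i, x i.
  apply: NNPP => nex; apply: nz; apply: functional_extensionality => i.
  by apply/negbTE/negP => xi; apply: nex; exists i.
case: (ex_minnP ex) => v xv vmin; exists v; split=> // i lt_iv.
by apply/negbTE/negP => /vmin; rewrite leqNgt lt_iv.
Qed.

Lemma is_v2_uniq (x : Z2) (e e' : nat) : is_v2 x e -> is_v2 x e' -> e = e'.
Proof.
case=> xe lte [xe' lte']; case: (ltngtP e e') => // [/lte' | /lte]; by rewrite ?xe ?xe'.
Qed.

Lemma is_v2_Z2zero (e : nat) : ~ is_v2 Z2zero e.
Proof. by case. Qed.

Lemma is_v2_mul4 (m : Z2) (v : nat) : is_v2 m v -> is_v2 (mul4 m) v.+2.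
Proof.
case=> mv lt_v; split; first by rewrite /mul4 /= subn2.
by move=> i lt_i; rewrite /mul4; case: ltnP => // le2i; apply: lt_v; lia.
Qed.

(* The first digit at which x and y differ is v_2(x - y). *)
Definition zdiff (x y : Z2) : Z2 := fun i => x i != y i.

Lemma zdiffx0 (x : Z2) : zdiff x Z2zero = x.
Proof. by apply: functional_extensionality => i; rewrite /zdiff /=; case: (x i). Qed.

Lemma zdiffxx (x : Z2) : zdiff x x = Z2zero.
Proof. by apply: functional_extensionality => i; rewrite /zdiff eqxx. Qed.

Lemma zdiff_neq0 (x y : Z2) : x <> y -> zdiff x y <> Z2zero.
Proof.
move=> nxy h0; apply: nxy; apply: functional_extensionality => i.
by have := congr1 (fun f => f i) h0; rewrite /zdiff /= => /negbFE /eqP.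
Qed.

Lemma zdiff_v2_gt (x y : Z2) (e d : nat) :
  is_v2 x e -> is_v2 y e -> is_v2 (zdiff x y) d -> (e < d)%N.
Proof.
case=> xe xlt [ye ylt] [hd dlt]; rewrite ltnNge leq_eqVlt.
apply/negP => /orP [/eqP de | lt_de]; first by move: hd; rewrite /zdiff de xe ye.
by move: hd; rewrite /zdiff xlt ?ylt.
Qed.

Lemma is_v2_of_zdiff (x y : Z2) (e d : nat) :
  is_v2 y e -> is_v2 (zdiff x y) d -> (e < d)%N -> is_v2 x e.
Proof.
case=> ye ylt [_ dlt] lt_ed; have agree i : (i < d)%N -> x i = y i.
  by move=> /dlt; rewrite /zdiff => /negbFE /eqP.
split=> [|i lt_ie]; rewrite agree ?ye ?ylt //; lia.
Qed.

Lemma res_sub_v2z (x y : Z2) (d N : nat) : is_v2 (zdiff x y) d -> (d < N)%N ->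
  is_v2z ((res N x)%:Z - (res N y)%:Z) d.
Proof.
rewrite /is_v2 /zdiff => -[hd hlow] dN.
have eq_low : res d x = res d y by apply/res_eq => i /hlow /negbFE /eqP.
have /dvdzP [qx hx] := dvdz_res x dN; have /dvdzP [qy hy] := dvdz_res y dN.
rewrite -[(res N x)%:Z](subrK (res d.+1 x)%:Z) -[(res N y)%:Z](subrK (res d.+1 y)%:Z).
rewrite hx hy !res_S eq_low.
move: hd; case: (x d); case: (y d) => //= _; rewrite mul1n mul0n addn0 !PoszD PoszX2.
- by exists (qx - qy); rewrite exprS; ring.
- by exists (qx - qy - 1); rewrite exprS; ring.
Qed.

Lemma ball_v2 (e : nat) (x y : Z2) :
  ball e.+1 (res e y + (~~ y e) * 2 ^ e) x <-> is_v2 (zdiff x y) e.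
Proof.
have digits (c d : bool) :
    (res e x + c * 2 ^ e = res e y + d * 2 ^ e)%N <-> res e x = res e y /\ c = d.
  by have := res_lt e x; have := res_lt e y; case: c; case: d => /=; split; lia.
rewrite /ball res_S digits res_eq /is_v2 /zdiff.
split=> [[hlow hd] | [hd hlow]].
  by split=> [|i /hlow ->]; rewrite ?hd ?eqxx //; case: (y e).
by split=> [i /hlow /negbFE /eqP // |]; move: hd; case: (x e); case: (y e).
Qed.

Lemma ball_c1 (e : nat) (x : Z2) : ball e.+1 (c1 e.+1) x <-> is_v2 x e.
Proof.
have -> : c1 e.+1 = (res e Z2zero + (~~ Z2zero e) * 2 ^ e)%N.
  by rewrite res_Z2zero /c1 /= mul1n.
by rewrite -{2}(zdiffx0 x); exact: ball_v2.
Qed.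

Lemma ball_c3 (m : Z2) (e : nat) (x : Z2) :
  ball e.+1 (c3 m e.+1) x <-> is_v2 (zdiff x (mul4 m)) e.
Proof.
suff -> : c3 m e.+1 = (res e (mul4 m) + (~~ mul4 m e) * 2 ^ e)%N by exact: ball_v2.
have res4 : res e.+1 (mul4 m) = (4 * res e.+1 m %% 2 ^ e.+1)%N.
  by rewrite -res_mul4 res_mod //; lia.
rewrite /c3 /= -modnDml -res4 res_S -addnA.
have := res_lt e (mul4 m); case: (mul4 m e) => /= lt_res.
  by rewrite mul1n mul0n addn0 addnn -mul2n -expnS modnDr modn_small // expnS; lia.
by rewrite mul0n mul1n add0n modn_small // expnS; lia.
Qed.

(** * The reductions [fn] *)

Lemma fnE (m : Z2) (L a : nat) : (fn m L a)%:Z = (fZ (res L m) a %% 2 ^+ L)%Z.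
Proof. by rewrite /fn gez0_abs PoszX2 // modz_ge0 // expf_neq0. Qed.

Lemma fn_lt (m : Z2) (L a : nat) : (fn m L a < 2 ^ L)%N.
Proof. by rewrite -ltz_nat fnE PoszX2 ltz_pmod // exprn_gt0. Qed.

Lemma dvdz_fn (m : Z2) (L K a : nat) :
  (L <= K)%N -> (2 ^+ L %| (fn m L a)%:Z - fZ (res K m) a)%Z.
Proof.
move=> le_LK; apply: (@dvdz_subr_trans _ _ (fZ (res L m) a)).
  apply/dvdzP; exists (- (fZ (res L m) a %/ 2 ^+ L)%Z).
  by rewrite fnE {2}(divz_eq (fZ (res L m) a) (2 ^+ L)); ring.
have -> : fZ (res L m) a - fZ (res K m) a = 4 * a%:Z * ((res K m)%:Z - (res L m)%:Z).
  by rewrite /fZ; ring.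
exact/dvdz_mull/dvdz_res.
Qed.

Lemma iter_fn_dvdz (m : Z2) (L K t y : nat) : (L <= K)%N ->
  (2 ^+ L %| (iter t (fn m L) y)%:Z - iter t (fZ (res K m)) y)%Z.
Proof.
move=> le_LK; elim: t => [|t IH] /=; first by rewrite subrr.
apply: dvdz_subr_trans (@dvdz_fn m L K _ le_LK) _.
by rewrite fZ_sub dvdz_mulr.
Qed.

Lemma iter_fnP (m : Z2) (L K t y : nat) : (L <= K)%N -> (y < 2 ^ L)%N ->
  iter t (fn m L) y = y <-> (2 ^+ L %| iter t (fZ (res K m)) y - y%:Z)%Z.
Proof.
move=> le_LK lt_y; have hF := @iter_fn_dvdz m L K t y le_LK.
split=> [e | hd]; first by move: hF; rewrite e dvdz_subC.
apply: (@eqn_dvdz _ _ (2 ^ L)) => //; first by case: t {hF hd} => // t; apply: fn_lt.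
by rewrite PoszX2; apply: dvdz_subr_trans hF hd.
Qed.

Lemma fn_mod (m : Z2) (n a : nat) : (fn m n.+1 a %% 2 ^ n)%N = fn m n (a %% 2 ^ n).
Proof.
apply: (@eqn_dvdz _ _ (2 ^ n)); rewrite ?ltn_mod ?expn_gt0 ?fn_lt //.
apply: dvdz_subr_trans (dvdz_modn _ _) _; rewrite PoszX2.
apply: (@dvdz_subr_trans _ _ (fZ (res n.+1 m) a)).
  exact: dvdz_trans (dvdz_exp2l _ (leqnSn n)) (dvdz_fn _ _ (leqnn _)).
rewrite dvdz_subC; apply: dvdz_subr_trans (@dvdz_fn m n n.+1 _ (leqnSn n)) _.
by rewrite fZ_sub dvdz_mulr // -PoszX2 dvdz_modn.
Qed.

Lemma res_fZ2 (m x : Z2) (n : nat) : res n (fZ2 m x) = fn m n (res n x).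
Proof.
elim: n => [|n IH].
  by have := fn_lt m 0 (res 0 x); rewrite /res !big_ord0 expn0 ltnS leqn0 => /eqP.
rewrite res_S IH /fZ2; set Q := fn m n.+1 (res n.+1 x).
have Qlo : (Q %% 2 ^ n)%N = fn m n (res n x) by rewrite /Q fn_mod res_mod.
have Qhi : (Q %/ 2 ^ n < 2)%N by rewrite ltn_divLR ?expn_gt0 // -expnS fn_lt.
rewrite [in RHS](divn_eq Q (2 ^ n)) Qlo addnC.
by case: (Q %/ 2 ^ n)%N Qhi => [|[|]].
Qed.

(** * Fixed points *)

Lemma fZ2_fixedP (m x : Z2) : fZ2 m x = x <->
  forall n, (2 ^+ n %| (res n x)%:Z * ((res n x)%:Z - 4 * (res n m)%:Z))%Z.
Proof.
split=> [hx n | hdiv].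
  have := res_fZ2 m x n; rewrite hx => /esym.
  by move/(@iter_fnP m n n 1 _ (leqnn n) (res_lt n x)); rewrite /= fZ_subr.
apply: Z2_ext => n; rewrite res_fZ2.
by apply: (proj2 (@iter_fnP m n n 1 _ (leqnn n) (res_lt n x))); rewrite /= fZ_subr.
Qed.

Lemma fZ2_fixed0 (m : Z2) : fZ2 m Z2zero = Z2zero.
Proof. by apply/fZ2_fixedP => n; rewrite res_Z2zero mul0r. Qed.

Lemma fZ2_fixed_mul4 (m : Z2) : fZ2 m (mul4 m) = mul4 m.
Proof. by apply/fZ2_fixedP => n; rewrite dvdz_mull // dvdz_res_mul4. Qed.

Lemma Z2zero_neq_mul4 (m : Z2) (v : nat) : is_v2 m v -> Z2zero <> mul4 m.
Proof. by case=> mv _ /(congr1 (fun f => f v.+2)); rewrite /mul4 /= subn2 mv. Qed.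

(* Otherwise v_2(x (x - 4m)) = v_2(x) + v_2(x - 4m) would be finite. *)
Lemma fZ2_fixed_eq (m x : Z2) : fZ2 m x = x -> x = Z2zero \/ x = mul4 m.
Proof.
move/fZ2_fixedP => hx; case: (classic (x = Z2zero)) => [|/is_v2_exists [e he]].
  by left.
right; apply: NNPP => /zdiff_neq0 /is_v2_exists [d hd].
set N := (e + d).+1; set r := (res N x)%:Z.
have vx : is_v2z r e.
  move: he; rewrite -{1}(zdiffx0 x) => /res_sub_v2z /(_ (ltn_addr d (ltnSn e))).
  by rewrite res_Z2zero subr0.
have vd : is_v2z (r - 4 * (res N m)%:Z) d.
  rewrite -[r](subrK (res N (mul4 m))%:Z) -addrA.
  apply: v2zDr (res_sub_v2z hd _) _; first by rewrite /N; lia.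
  by apply: dvdz_trans (dvdz_res_mul4 m N); apply: dvdz_exp2l; rewrite /N; lia.
exact: v2z_ndvdz (v2zM vx vd) (hx N).
Qed.

Lemma fZ2_odd (m x : Z2) : res 1 x = 1%N -> res 1 (fZ2 m x) = 0%N.
Proof.
move=> hx; rewrite res_fZ2 hx; apply: (@eqn_dvdz _ _ 2) => //; first exact: fn_lt.
apply: dvdz_subr_trans (@dvdz_fn m 1 1 1 (leqnn 1)) _.
by apply/dvdzP; exists (1 - 2 * (res 1 m)%:Z); rewrite /fZ; ring.
Qed.

(** * Balls of type I *)

Lemma in_X_mod (m : Z2) (N b l n a y : nat) : (n <= N)%N ->
  above_fixed m N b l n a -> in_X m N b l y -> (y %% 2 ^ n)%N = a.
Proof.
move=> le_nN hab [_ [j lt_jl hy]]; rewrite -(hab j lt_jl) -hy.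
by apply/esym/modn_dvdm/dvdn_exp2l.
Qed.

Section TypeI.
Variables (m : Z2) (n a k K0 : nat).
Hypothesis ball_val : forall K (x : int), (K0 <= K)%N -> (2 ^+ n %| x - a%:Z)%Z ->
  (2 %| x)%Z /\ is_v2z (x * (x - 4 * (res K m)%:Z)) (n + k).
Hypothesis nk_ge2 : (2 <= n + k)%N.

Lemma ball_exact_period L y : (y < 2 ^ L)%N -> (y %% 2 ^ n)%N = a ->
  exact_period (fn m L) (2 ^ (L - (n + k))) y.
Proof.
move=> lt_y hya; have le_LK := leq_addr K0 L.
have [|y_even hv] := @ball_val (L + K0)%N y%:Z (leq_addl L K0).
  by rewrite dvdz_subC -hya -PoszX2 dvdz_modn.
have val_iter := v2z_iter_fZ_pow2 y_even nk_ge2 hv.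
apply: exact_period_pow2 => [|s_gt0].
  by apply/(iter_fnP _ _ le_LK lt_y)/(v2z_dvdz (val_iter _)); lia.
have eL : L = (n + k + (L - (n + k)).-1).+1 by lia.
by move/(iter_fnP _ _ le_LK lt_y); rewrite [in X in (X %| _)%Z]eL; apply: v2z_ndvdz.
Qed.

Lemma lifts_exact_period N b l : (n <= N)%N -> (b < 2 ^ N)%N ->
  exact_period (fn m N) l b -> above_fixed m N b l n a ->
  l = (2 ^ (N - (n + k)))%N /\
  forall y, in_X m N b l y -> exact_period (fn m N.+1) (2 ^ (N.+1 - (n + k)))%N y.
Proof.
move=> le_nN lt_b hper hab; have hba : (b %% 2 ^ n)%N = a by apply: (hab 0); case: hper.
split=> [|y hy]; first exact: exact_period_uniq hper (ball_exact_period lt_b hba).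
by have [lt_y _] := hy; apply: ball_exact_period lt_y (in_X_mod le_nN hab hy).
Qed.

Lemma typeI_of_ball_val : (a < 2 ^ n)%N -> typeI m n a k.
Proof.
move=> lt_a; split=> // [|j b l lt_jk lt_b hper hab | N b l le_nkN lt_b hper hab].
- have [_ [fixed _]] := ball_exact_period lt_a (modn_small lt_a).
  by move: fixed; rewrite (_ : n - (n + k) = 0)%N //; lia.
- have [el] := lifts_exact_period (leq_addr j n) lt_b hper hab; subst l.
  by rewrite (_ : n + j - (n + k) = (n + j).+1 - (n + k))%N //; lia.
- have [el] := lifts_exact_period (leq_trans (leq_addr k n) le_nkN) lt_b hper hab; subst l.
  by rewrite /grows -expnS -subSn.
Qed.

End TypeI.

Section BallValuations.
Variables (m : Z2) (v : nat).
Hypothesis m_v2 : is_v2 m v.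

Lemma v2z_4res K : (v < K)%N -> is_v2z (4 * (res K m)%:Z) v.+2.
Proof.
move=> lt_vK; have := @res_sub_v2z m Z2zero v K; rewrite zdiffx0 res_Z2zero subr0.
by case/(_ m_v2 lt_vK) => u ->; exists u; rewrite !exprS; ring.
Qed.

Lemma ball_val_E1 n K (x : int) : (2 <= n < v + 3)%N -> (n + v <= K)%N ->
  (2 ^+ n %| x - (c1 n)%:Z)%Z ->
  (2 %| x)%Z /\ is_v2z (x * (x - 4 * (res K m)%:Z)) (n + (n - 2)).
Proof.
case: n => // e /andP [e_ge1 lt_ev] le_K; rewrite /c1 /= PoszX2 => /v2z_of_dvdz vx.
split; first by rewrite -(expr1 2); apply: v2z_dvdz vx _.
rewrite (_ : e.+1 + (e.+1 - 2) = e + e)%N; last by lia.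
apply: v2zM vx (v2zDr vx _); rewrite rpredN.
by apply: v2z_dvdz (v2z_4res _) _; lia.
Qed.

Lemma ball_val_E2 n K (x : int) : (v + 3 < n)%N -> (n + v <= K)%N ->
  (2 ^+ n %| x - (c1 n)%:Z)%Z ->
  (2 %| x)%Z /\ is_v2z (x * (x - 4 * (res K m)%:Z)) (n + (v + 1)).
Proof.
case: n => // e lt_ve le_K; rewrite /c1 /= PoszX2 => /v2z_of_dvdz vx.
split; first by rewrite -(expr1 2); apply: v2z_dvdz vx _; lia.
rewrite (_ : e.+1 + (v + 1) = e + v.+2)%N; last by lia.
apply: (v2zM vx); rewrite addrC; apply: v2zDr (v2zN (v2z_4res _)) _; first by lia.
by apply: v2z_dvdz vx _; lia.
Qed.

Lemma ball_val_E3 n K (x : int) : (v + 3 < n)%N -> (n + v <= K)%N ->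
  (2 ^+ n %| x - (c3 m n)%:Z)%Z ->
  (2 %| x)%Z /\ is_v2z (x * (x - 4 * (res K m)%:Z)) (n + (v + 1)).
Proof.
case: n => // e lt_ve le_K hx.
have vd : is_v2z (x - 4 * (res K m)%:Z) e.
  apply: v2z_of_dvdz; rewrite -addrA -opprD; apply: dvdz_subr_trans hx _.
  rewrite -PoszX2; apply: dvdz_subr_trans (dvdz_modn _ _) _.
  rewrite !PoszX2 PoszD PoszM PoszX2.
  have -> : 4%:Z * (res e.+1 m)%:Z + 2 ^+ e - (4 * (res K m)%:Z + 2 ^+ e)
    = 4 * ((res e.+1 m)%:Z - (res K m)%:Z) by ring.
  by rewrite dvdz_mull // dvdz_subC dvdz_res //; lia.
have vx : is_v2z x v.+2.
  rewrite -[x](subrK (4 * (res K m)%:Z)) addrC.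
  by apply: v2zDr (v2z_4res _) (v2z_dvdz vd _); lia.
split; first by rewrite -(expr1 2); apply: v2z_dvdz vx _.
rewrite (_ : e.+1 + (v + 1) = v.+2 + e)%N; last by lia.
exact: v2zM.
Qed.

End BallValuations.

(** * The partition of 2Z_2 *)

Definition piece_spec (m : Z2) (v : nat) (l : piece_lbl) (x : Z2) : Prop :=
  match l with
  | L04 => x = Z2zero \/ x = mul4 m
  | L1 n => is_v2 x n.-1 /\ (0 < n.-1 < v.+2)%N
  | L2 n => is_v2 x n.-1 /\ (v.+2 < n.-1)%N
  | L3 n => [/\ is_v2 x v.+2, is_v2 (zdiff x (mul4 m)) n.-1 & (v.+2 < n.-1)%N]
  end.

Lemma piece_specP (m : Z2) (v : nat) (l : piece_lbl) (x : Z2) :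
  is_v2 m v -> valid_lbl v l -> piece m l x -> piece_spec m v l x.
Proof.
move=> m_v2; case: l => [|[|n]|[|n]|[|n]] //= hn.
- by move/ball_c1 => ?; split=> //; lia.
- by move/ball_c1 => ?; split=> //; lia.
- move/ball_c3 => hd; split=> //; last by lia.
  by apply: is_v2_of_zdiff (is_v2_mul4 m_v2) hd _; lia.
Qed.

(* Distinct labels are told apart by v_2(x), or by v_2(x - 4m) when v_2(x) = v_2(4m). *)
Lemma piece_disjoint (m : Z2) (v : nat) (l l' : piece_lbl) (x : Z2) :
  is_v2 m v -> valid_lbl v l -> valid_lbl v l' -> piece m l x -> piece m l' x -> l = l'.
Proof.
move=> m_v2 hl hl' /(piece_specP m_v2 hl) hx /(piece_specP m_v2 hl') hx'.
have m4_v2 := is_v2_mul4 m_v2.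
case: l hl hx => [|n|n|n] _ /= hx; case: l' hl' hx' => [|n'|n'|n'] _ /= hx' //;
  try (case: hx => ?; subst x); try (case: hx' => ?; subst x);
  repeat match goal with H : _ /\ _ |- _ => destruct H | H : and3 _ _ _ |- _ => destruct H end.
all: try by match goal with
  | H : is_v2 Z2zero _ |- _ => case: (is_v2_Z2zero H)
  | H : is_v2 (zdiff ?y ?y) _ |- _ => rewrite zdiffxx in H; case: (is_v2_Z2zero H)
  end.
all: repeat match goal with H1 : is_v2 ?x ?e, H2 : is_v2 ?x ?e' |- _ =>
  have := is_v2_uniq H1 H2; clear H2 end.
all: move=> *; first [congr L1; lia | congr L2; lia | congr L3; lia | exfalso; lia].
Qed.

Lemma res1_eq0 (x : Z2) : res 1 x = 0%N <-> x 0%N = false.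
Proof. by rewrite res_S /res big_ord0; case: (x 0%N). Qed.

Lemma piece_cover (m : Z2) (v : nat) (x : Z2) : is_v2 m v ->
  res 1 x = 0%N <-> exists l, valid_lbl v l /\ piece m l x.
Proof.
move=> m_v2; rewrite res1_eq0; split=> [x0 | [l [hl /(piece_specP m_v2 hl)]]]; last first.
  case: l {hl} => [|n|n|n] /=; first by case=> ->.
  - by case=> [[_ x_lt] ?]; apply: x_lt; lia.
  - by case=> [[_ x_lt] ?]; apply: x_lt; lia.
  - by case=> [[_ x_lt] _ _]; apply: x_lt.
case: (classic (x = Z2zero)) => [->|/is_v2_exists [e x_v2]].
  by exists L04; split=> //; left.
have e_gt0 : (0 < e)%N by case: e x_v2 => [[]|]; rewrite ?x0.
case: (ltngtP e v.+2) => [lt_ev | lt_ve | ev]; last subst e.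
- by exists (L1 e.+1); split; [rewrite /=; lia | apply/ball_c1].
- by exists (L2 e.+1); split; [rewrite /=; lia | apply/ball_c1].
case: (classic (x = mul4 m)) => [->|/zdiff_neq0 /is_v2_exists [d hd]].
  by exists L04; split=> //; right.
have lt_vd := zdiff_v2_gt x_v2 (is_v2_mul4 m_v2) hd.
by exists (L3 d.+1); split; [rewrite /=; lia | apply/ball_c3].
Qed.

Local Close Scope ring_scope.

Theorem theorem6p3 (m : Z2) (v : nat) (hm : m <> Z2zero) (hv : is_v2 m v) :
  [/\ (* fixed points: exactly 0 and 4m, which are distinct *)
      [/\ fZ2 m Z2zero = Z2zero, fZ2 m (mul4 m) = mul4 m, Z2zero <> mul4 m &
          forall x, fZ2 m x = x -> x = Z2zero \/ x = mul4 m],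
      (* f(1 + 2Z_2) is contained in 2Z_2 *)
      (forall x, res 1 x = 1 -> res 1 (fZ2 m x) = 0),
      (* 2Z_2 is the disjoint union of {0,4m} and the balls forming E1, E2, E3 *)
      (forall x, res 1 x = 0 <-> exists l, valid_lbl v l /\ piece m l x),
      (forall l l' x, valid_lbl v l -> valid_lbl v l' -> piece m l x -> piece m l' x -> l = l') &
      (* types of the balls *)
      [/\ forall n, 2 <= n < v + 3 -> typeI m n (c1 n) (n - 2),
          forall n, v + 3 < n -> typeI m n (c1 n) (v + 1) &
          forall n, v + 3 < n -> typeI m n (c3 m n) (v + 1)]].
Proof.
have c1_lt n : 2 <= n -> c1 n < 2 ^ n by case: n => // n _; rewrite /c1 ltn_exp2l.
split.
- split; [exact: fZ2_fixed0 | exact: fZ2_fixed_mul4 |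
         exact: Z2zero_neq_mul4 hv | exact: fZ2_fixed_eq].
- exact: fZ2_odd.
- by move=> x; apply: piece_cover.
- by move=> l l' x; apply: piece_disjoint.
split=> n hn; apply: (@typeI_of_ball_val _ _ _ _ (n + v)) => [K x||].
- exact: (ball_val_E1 hv hn).
- lia.
- by apply: c1_lt; lia.
- exact: (ball_val_E2 hv hn).
- lia.
- by apply: c1_lt; lia.
- exact: (ball_val_E3 hv hn).
- lia.
- by rewrite ltn_pmod ?expn_gt0.
Qed.
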